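(* Let $A,B,C$ be finite sets, let $\varphi(x,y)$ be a condensation FO formula over $A$, and let $f\colon A^{\mathrm{ord}+}\to B$ and $g\colon B^{\mathrm{ord}}\to C$ be FO-definable maps. Then the map $A^{\mathrm{ord}}\to C$ sending $u$ to $g(w_u)$, where $w_u\in B^{\mathrm{ord}}$ is the word with domain $\mathrm{dom}(\hat\varphi(u))$ whose letter at position $i$ is $f(\hat\varphi(u)_i)$, is FO-definable.
   Context: Countable ordinal words: for a set $\Sigma$, a countable ordinal word over $\Sigma$ is a map $w\colon\alpha\to\Sigma$ with $\alpha$ a countable ordinal (its domain $\mathrm{dom}(w)$); $\Sigma^{\mathrm{ord}}$ is the set of all of them, $\Sigma^{\mathrm{ord}+}$ the nonempty ones. First-order logic: over a finite alphabet $\Sigma$, FO formulas are built from atoms $x<y$ and $a(x)$ ($a\in\Sigma$) by Boolean connectives and quantification over positions, interpreted on countable ordinal words. A language is FO-definable if it is the set of words satisfying some FO sentence. For $L\subseteq\Sigma^{\mathrm{ord}}$ and a finite set $X$, a map $f\colon L\to X$ is FO-definable if every preimage $f^{-1}(x)$, $x\in X$, is an FO-definable language. Condensations: a condensation of a countable ordinal $\alpha$ is an equivalence relation on $\alpha$ with convex classes; the quotient is again a countable ordinal. A condensation formula is an FO formula $\varphi(x,y)$ such that for every word $w\in\Sigma^{\mathrm{ord}}$ the relation $\{(\iota,\kappa): w,[x\mapsto\iota,y\mapsto\kappa]\models\varphi\}$ is a condensation of $\mathrm{dom}(w)$. It induces $\hat\varphi\colon\Sigma^{\mathrm{ord}}\to(\Sigma^{\mathrm{ord}+})^{\mathrm{ord}}$: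 $\hat\varphi(u)$ has domain the ordered set of classes, and its letter at class $I$ is the subword $(u_\iota)_{\iota\in I}$. *)

From mathcomp Require Import all_boot.
Set Implicit Arguments.
Unset Strict Implicit.
Unset Printing Implicit Defensive.

(* It is a countable ordinal word when
   [wf_word] holds: the order is a strict total well-founded order and the
   encoding is injective (countability).  Every countable ordinal word
   w : alpha -> S is represented (up to isomorphism) in this way, and
   conversely every well-formed word is isomorphic to one with an ordinal
   domain. *)
Record word (S : Type) := Word {
  pos : Type;
  enc : pos -> nat;
  wlt : pos -> pos -> Prop;
  lab : pos -> S
}.

Definition wf_word S (w : word S) : Prop :=
  injective (@enc S w) /\
  (forall p : pos w, ~ wlt p p) /\
  (forall p q r : pos w, wlt p q -> wlt q r -> wlt p r) /\
  (forall p q : pos w, p <> q -> wlt p q \/ wlt q p) /\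
  well_founded (@wlt S w).

Definition nonempty_word S (w : word S) : Prop := inhabited (pos w).

Inductive form (S : Type) :=
| FLt  : nat -> nat -> form S
| FLab : S -> nat -> form S
| FNot : form S -> form S
| FAnd : form S -> form S -> form S
| FOr  : form S -> form S -> form S
| FEx  : nat -> form S -> form S
| FAll : nat -> form S -> form S.

Fixpoint fv_in S (V : nat -> Prop) (phi : form S) : Prop :=
  match phi with
  | FLt x y => V x /\ V y
  | FLab _ x => V x
  | FNot p => fv_in V p
  | FAnd p q => fv_in V p /\ fv_in V q
  | FOr p q => fv_in V p /\ fv_in V q
  | FEx x p => fv_in (fun z => z = x \/ V z) p
  | FAll x p => fv_in (fun z => z = x \/ V z) p
  end.

Definition sentence S (phi : form S) : Prop := fv_in (fun _ => False) phi.

Definition upd T (e : nat -> option T) (x : nat) (p : T) : nat -> option T :=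
  fun z => if Nat.eqb z x then Some p else e z.

Fixpoint sat S (w : word S) (e : nat -> option (pos w)) (phi : form S) : Prop :=
  match phi with
  | FLt x y => match e x, e y with
               | Some p, Some q => wlt p q
               | _, _ => False end
  | FLab a x => match e x with Some p => lab p = a | None => False end
  | FNot p => ~ sat e p
  | FAnd p q => sat e p /\ sat e q
  | FOr p q => sat e p \/ sat e q
  | FEx x p => exists v : pos w, sat (upd e x v) p
  | FAll x p => forall v : pos w, sat (upd e x v) p
  end.

Definition env0 T : nat -> option T := fun _ => None.

Definition models S (w : word S) (psi : form S) : Prop := sat (@env0 (pos w)) psi.

Definition FO_language S (L : word S -> Prop) : Prop :=
  exists psi : form S, sentence psi /\
    forall w, wf_word w -> (L w <-> models w psi).

Definition FO_map S (X : Type) (L : word S -> Prop) (h : word S -> X) : Prop :=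
  forall x : X, FO_language (fun w => L w /\ h w = x).

(* variables x := 0, y := 1 *)
Definition env2 T (p q : T) : nat -> option T :=
  upd (upd (@env0 T) 0 p) 1 q.

Definition phi_rel S (phi : form S) (w : word S) : pos w -> pos w -> Prop :=
  fun p q => sat (env2 p q) phi.

Definition is_condensation S (w : word S) (E : pos w -> pos w -> Prop) : Prop :=
  (forall p : pos w, E p p) /\
  (forall p q : pos w, E p q -> E q p) /\
  (forall p q r : pos w, E p q -> E q r -> E p r) /\
  (forall p q r : pos w, wlt p q -> wlt q r -> E p r -> E p q).

Definition condensation_formula S (phi : form S) : Prop :=
  fv_in (fun z => z = 0 \/ z = 1) phi /\
  forall w : word S, wf_word w -> is_condensation (@phi_rel S phi w).

Definition subword S (w : word S) (I : pos w -> Prop) : word S :=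
  @Word S {p : pos w | I p}
    (fun p => enc (proj1_sig p))
    (fun p q => wlt (proj1_sig p) (proj1_sig q))
    (fun p => lab (proj1_sig p)).

Definition class_rep S (w : word S) (E : pos w -> pos w -> Prop) (p : pos w) : Prop :=
  forall q : pos w, wlt q p -> ~ E q p.

(* w_u : the word over B with domain dom(phi^(u)) (the ordered set of
   classes, represented by their least elements) whose letter at a class I
   is f applied to the subword u|_I = phi^(u)_I. *)
Definition condense_word A B (phi : form A) (f : word A -> B) (u : word A) : word B :=
  let E := @phi_rel A phi u in
  @Word B {p : pos u | class_rep E p}
    (fun p => enc (proj1_sig p))
    (fun p q => wlt (proj1_sig p) (proj1_sig q))
    (fun p => f (subword (E (proj1_sig p)))).

(* Pick sentences psi_b defining f^-1(b) and chi defining g^-1(c).  The positions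
   of w_u are the least elements of the phi-classes of u, which is FO-definable from
   phi; so chi becomes a sentence over A once its quantifiers are relativized to
   these representatives and each letter test b(x) is replaced by psi_b relativized
   to the phi-class of x.  Every class is nonempty (phi is reflexive), so psi_b
   decides f on it. *)

From mathcomp Require Import all_boot zify.
From Stdlib Require Import PeanoNat Classical FunctionalExtensionality ProofIrrelevance.
From Stdlib Require Import IndefiniteDescription Wellfounded.Inverse_Image.

Set Implicit Arguments.
Unset Strict Implicit.

Lemma upd_eq T (e : nat -> option T) x p : upd e x p x = Some p.
Proof. by rewrite /upd Nat.eqb_refl. Qed.

Lemma upd_neq T (e : nat -> option T) x p z : z <> x -> upd e x p z = e z.
Proof. by move=> /Nat.eqb_neq; rewrite /upd => ->. Qed.

Fixpoint rename {S : Type} (r : nat -> nat) (psi : form S) : form S :=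
  match psi with
  | FLt x y => FLt S (r x) (r y)
  | FLab a x => FLab a (r x)
  | FNot p => FNot (rename r p)
  | FAnd p q => FAnd (rename r p) (rename r q)
  | FOr p q => FOr (rename r p) (rename r q)
  | FEx x p => FEx (r x) (rename r p)
  | FAll x p => FAll (r x) (rename r p)
  end.

Lemma upd_comp T (e : nat -> option T) (r : nat -> nat) x p :
  injective r -> upd e (r x) p \o r =1 upd (e \o r) x p.
Proof.
move=> r_inj z /=; have [->|zx] := Nat.eq_dec z x; first by rewrite !upd_eq.
by rewrite !upd_neq // => /r_inj.
Qed.

Lemma sat_rename S (w : word S) (r : nat -> nat) (psi : form S)
    (e : nat -> option (pos w)) :
  injective r -> sat e (rename r psi) <-> sat (e \o r) psi.
Proof.
move=> r_inj; elim: psi e => [x y|a x|p IH|p IHp q IHq|p IHp q IHq|x p IH|x p IH] e /=;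
  rewrite ?IH ?IHp ?IHq //.
- by split=> -[v Hv]; exists v; move: Hv;
    rewrite IH (functional_extensionality _ _ (upd_comp e x v r_inj)).
- by split=> H v; move: (H v);
    rewrite IH (functional_extensionality _ _ (upd_comp e x v r_inj)).
Qed.

Lemma upd_agree T (e1 e2 : nat -> option T) (V : nat -> Prop) x p :
  (forall z, V z -> e1 z = e2 z) -> forall z, z = x \/ V z -> upd e1 x p z = upd e2 x p z.
Proof.
by move=> e12 z; case: (Nat.eq_dec z x) => [->|zx [//|/e12]]; rewrite ?upd_eq ?upd_neq.
Qed.

Lemma sat_agree S (w : word S) (psi : form S) (V : nat -> Prop)
    (e1 e2 : nat -> option (pos w)) :
  fv_in V psi -> (forall z, V z -> e1 z = e2 z) -> (sat e1 psi <-> sat e2 psi).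
Proof.
elim: psi V e1 e2 => [x y|a x|p IH|p IHp q IHq|p IHp q IHq|x p IH|x p IH] V e1 e2 /=.
- by move=> [Vx Vy] e12; rewrite !e12.
- by move=> Vx e12; rewrite e12.
- by move=> Vp e12; rewrite (IH V e1 e2).
- by move=> [Vp Vq] e12; rewrite (IHp V e1 e2) // (IHq V e1 e2).
- by move=> [Vp Vq] e12; rewrite (IHp V e1 e2) // (IHq V e1 e2).
- by move=> Vp e12; split=> -[v Hv]; exists v; move: Hv;
    rewrite (IH _ _ _ Vp (upd_agree (x:=x) v e12)).
- by move=> Vp e12; split=> H v; move: (H v); rewrite (IH _ _ _ Vp (upd_agree (x:=x) v e12)).
Qed.

Lemma fv_in_rename S (r : nat -> nat) (psi : form S) (V W : nat -> Prop) :
  fv_in V psi -> (forall z, V z -> W (r z)) -> fv_in W (rename r psi).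
Proof.
elim: psi V W => [x y|a x|p IH|p IHp q IHq|p IHp q IHq|x p IH|x p IH] V W /=;
  firstorder.
Qed.

(* Maps x_0, x_1 to x_a, x_b and moves every other variable beyond a and b, so that
   the renaming is injective as soon as a <> b. *)
Definition rename01 (a b k : nat) : nat :=
  match k with 0 => a | 1 => b | k => a + b + k end.

Lemma rename01_inj a b : a <> b -> injective (rename01 a b).
Proof. by move=> ab [|[|x]] [|[|y]] /=; lia. Qed.

Definition formula_at S (phi : form S) (a b : nat) : form S :=
  rename (rename01 a b) phi.

Lemma sat_formula_at S (w : word S) (phi : form S) a b
    (e : nat -> option (pos w)) p q :
  fv_in (fun z => z = 0 \/ z = 1) phi -> a <> b -> e a = Some p -> e b = Some q ->
  sat e (formula_at phi a b) <-> phi_rel phi p q.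
Proof.
move=> phi_fv ab ea eb; rewrite /formula_at sat_rename; last exact: rename01_inj.
by apply: (sat_agree phi_fv) => z [->|->].
Qed.

Lemma fv_in_formula_at S (phi : form S) a b (W : nat -> Prop) :
  fv_in (fun z => z = 0 \/ z = 1) phi -> W a -> W b -> fv_in W (formula_at phi a b).
Proof. by move=> phi_fv Wa Wb; apply: (fv_in_rename phi_fv) => z [->|->]. Qed.

Lemma upd_defined T (e : nat -> option T) (V : nat -> Prop) x p :
  (forall n, V n -> e n <> None) -> forall n, n = x \/ V n -> upd e x p n <> None.
Proof.
by move=> e_def n; case: (Nat.eq_dec n x) => [->|nx [//|/e_def]]; rewrite ?upd_eq ?upd_neq.
Qed.

Fixpoint relativize {S T : Type} (r : nat -> nat) (guard : nat -> form S)
    (atom : T -> nat -> form S) (psi : form T) : form S :=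
  match psi with
  | FLt x y => FLt S (r x) (r y)
  | FLab b x => atom b x
  | FNot p => FNot (relativize r guard atom p)
  | FAnd p q => FAnd (relativize r guard atom p) (relativize r guard atom q)
  | FOr p q => FOr (relativize r guard atom p) (relativize r guard atom q)
  | FEx x p => FEx (r x) (FAnd (guard x) (relativize r guard atom p))
  | FAll x p => FAll (r x) (FOr (FNot (guard x)) (relativize r guard atom p))
  end.

Lemma fv_in_relativize S T (r : nat -> nat) (guard : nat -> form S)
    (atom : T -> nat -> form S) (U : nat -> Prop) :
  (forall x (W : nat -> Prop), (forall z, U z -> W z) -> W (r x) -> fv_in W (guard x)) ->
  (forall b x (W : nat -> Prop), (forall z, U z -> W z) -> W (r x) -> fv_in W (atom b x)) ->
  forall (psi : form T) (V W : nat -> Prop), fv_in V psi ->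
  (forall z, U z -> W z) -> (forall n, V n -> W (r n)) ->
  fv_in W (relativize r guard atom psi).
Proof.
move=> guard_fv atom_fv.
elim=> [x y|b x|p IH|p IHp q IHq|p IHp q IHq|x p IH|x p IH] V W /=; try by firstorder.
- move=> Vp UW VW; split; first by apply: guard_fv; auto.
  by apply: (IH _ _ Vp) => [z /UW|n [->|/VW]]; auto.
- move=> Vp UW VW; split; first by apply: guard_fv; auto.
  by apply: (IH _ _ Vp) => [z /UW|n [->|/VW]]; auto.
Qed.

Section Relativization.

Variables (S T : Type) (w : word S) (w' : word T) (emb : pos w' -> pos w).
Hypothesis emb_lt : forall p q, wlt (emb p) (emb q) <-> wlt p q.

Variables (r : nat -> nat) (guard : nat -> form S) (atom : T -> nat -> form S).
Variable e0 : nat -> option (pos w).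
Hypothesis r_inj : injective r.

(* Variables outside the range of r are parameters of the guards and atoms; they keep
   their values from e0. *)
Definition agrees_off_range (e : nat -> option (pos w)) : Prop :=
  forall z, (forall n, r n <> z) -> e z = e0 z.

Definition simulates (e : nat -> option (pos w)) (e' : nat -> option (pos w')) : Prop :=
  (forall n, e (r n) = option_map emb (e' n)) /\ agrees_off_range e.

Hypothesis sat_guard : forall e x p, agrees_off_range e -> e (r x) = Some p ->
  sat e (guard x) <-> exists p', emb p' = p.

Hypothesis sat_atom : forall e e' b x p', simulates e e' -> e' x = Some p' ->
  sat e (atom b x) <-> lab p' = b.

Lemma agrees_off_range_upd e x v :
  agrees_off_range e -> agrees_off_range (upd e (r x) v).
Proof. by move=> e_off z zr; rewrite upd_neq ?e_off // => zx; apply: (zr x). Qed.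

Lemma simulates_upd e e' x p' :
  simulates e e' -> simulates (upd e (r x) (emb p')) (upd e' x p').
Proof.
move=> [e_r e_off]; split; last exact: agrees_off_range_upd.
move=> n; have [->|nx] := Nat.eq_dec n x; first by rewrite !upd_eq.
by rewrite !upd_neq // => /r_inj.
Qed.

Lemma sat_guard_upd e x v :
  agrees_off_range e -> sat (upd e (r x) v) (guard x) <-> exists p', emb p' = v.
Proof. by move=> e_off; apply: sat_guard (upd_eq _ _ _); apply: agrees_off_range_upd. Qed.

Lemma sat_relativize (psi : form T) (V : nat -> Prop) e e' :
  fv_in V psi -> (forall n, V n -> e' n <> None) -> simulates e e' ->
  sat e (relativize r guard atom psi) <-> sat e' psi.
Proof.
elim: psi V e e' => [x y|b x|p IH|p IHp q IHq|p IHp q IHq|x p IH|x p IH] V e e' /=.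
- move=> _ _ [e_r _]; rewrite !e_r.
  by case: (e' x) => [p|]; case: (e' y) => [q|] //=; apply: emb_lt.
- move=> Vx def_e' sim; case e'x: (e' x) => [p'|]; last by case: (def_e' x Vx).
  exact: sat_atom sim e'x.
- by move=> Vp def_e' sim; rewrite (IH V e e').
- by move=> [Vp Vq] def_e' sim; rewrite (IHp V e e') // (IHq V e e').
- by move=> [Vp Vq] def_e' sim; rewrite (IHp V e e') // (IHq V e e').
- move=> Vp def_e' sim.
  have IHx p' := IH _ _ _ Vp (upd_defined (x:=x) (p:=p') def_e') (simulates_upd x p' sim).
  split=> [[v [gv Hv]]|[p' Hp']].
    have [p' emb_p'] := (sat_guard_upd x v sim.2).1 gv.
    by exists p'; rewrite -IHx emb_p'.
  exists (emb p'); split; last by rewrite IHx.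
  by apply/(sat_guard_upd x _ sim.2); exists p'.
- move=> Vp def_e' sim.
  have IHx p' := IH _ _ _ Vp (upd_defined (x:=x) (p:=p') def_e') (simulates_upd x p' sim).
  split=> [H p'|H v].
    rewrite -IHx; case: (H (emb p')) => // -[].
    by apply/(sat_guard_upd x _ sim.2); exists p'.
  rewrite (sat_guard_upd x _ sim.2).
  by case: (classic (exists p', emb p' = v)) => [[p' <-]|]; [right; rewrite IHx|left].
Qed.

End Relativization.

(* Even variables range over class representatives, odd ones inside a class. *)
Definition even_var (n : nat) : nat := 2 * n.
Definition odd_var (n : nat) : nat := (2 * n).+1.

Lemma even_var_inj : injective even_var.
Proof. by rewrite /even_var => m n; lia. Qed.

Lemma odd_var_inj : injective odd_var.
Proof. by rewrite /odd_var => m n; lia. Qed.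

Lemma odd_var_neq_even_var m n : odd_var m <> even_var n.
Proof. by rewrite /odd_var /even_var; lia. Qed.

Section Condensation.

Variables (A : Type) (phi : form A).
Hypothesis phi_fv : fv_in (fun z => z = 0 \/ z = 1) phi.

Definition class_formula (v : nat) (psi : form A) : form A :=
  relativize odd_var (fun x => formula_at phi v (odd_var x))
    (fun a x => FLab a (odd_var x)) psi.

Lemma fv_in_class_formula v psi (W : nat -> Prop) :
  sentence psi -> W v -> fv_in W (class_formula v psi).
Proof.
move=> psi_closed Wv; apply: (fv_in_relativize (U := eq v)) psi_closed _ _ => //.
- by move=> x W' vW' W'x; apply: fv_in_formula_at; auto.
- by move=> z <-.
Qed.

Lemma sat_class_formula (u : word A) (p0 : pos u) v psi (e : nat -> option (pos u)) :
  sentence psi -> (forall n, odd_var n <> v) -> e v = Some p0 ->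
  (forall n, e (odd_var n) = None) ->
  sat e (class_formula v psi) <-> models (subword (phi_rel phi p0)) psi.
Proof.
move=> psi_closed v_even ev e_odd.
eapply sat_relativize with (emb := @proj1_sig _ _) (e0 := e) (e' := @env0 _)
  (V := fun _ => False) => //.
- exact: odd_var_inj.
- move=> e1 x p e1_off e1x.
  rewrite (sat_formula_at phi_fv _ (etrans (e1_off v v_even) ev) e1x).
    by split=> [p0p|[[q p0q] <-]]; first by exists (exist _ p p0p).
  by move=> /esym; apply: v_even.
- by move=> e1 e' a x p' [e1_r _] e'x; rewrite /= e1_r e'x.
Qed.

Definition least_in_class (v : nat) : form A :=
  FAll 1 (FNot (FAnd (FLt A 1 v) (formula_at phi 1 v))).

Lemma fv_in_least_in_class v (W : nat -> Prop) : W v -> fv_in W (least_in_class v).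
Proof. by move=> Wv /=; split; [split; auto|apply: fv_in_formula_at; auto]. Qed.

Lemma sat_least_in_class (u : word A) v (e : nat -> option (pos u)) p :
  v <> 1 -> e v = Some p ->
  sat e (least_in_class v) <-> class_rep (@phi_rel A phi u) p.
Proof.
move=> v1 ev; have ev' q : upd e 1 q v = Some p by rewrite upd_neq.
have phi_q q : sat (upd e 1 q) (formula_at phi 1 v) <-> phi_rel phi q p.
  by apply: sat_formula_at (upd_eq _ _ _) (ev' q) => // /esym.
rewrite /= /class_rep; split=> [H q qp pq|H q].
  by apply: (H q); rewrite ev' phi_q.
by rewrite ev' phi_q => -[]; apply: H.
Qed.

Definition condense_formula B (psi : B -> form A) (chi : form B) : form A :=
  relativize even_var (fun x => least_in_class (even_var x))
    (fun b x => class_formula (even_var x) (psi b)) chi.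

Lemma sentence_condense_formula B (psi : B -> form A) chi :
  (forall b, sentence (psi b)) -> sentence chi -> sentence (condense_formula psi chi).
Proof.
move=> psi_closed chi_closed.
apply: (fv_in_relativize (U := fun _ => False)) chi_closed _ _ => //.
- by move=> x W _ Wx; apply: fv_in_least_in_class.
- by move=> b x W _ Wx; apply: fv_in_class_formula.
Qed.

Lemma sat_condense_formula B (f : word A -> B) (psi : B -> form A) chi (u : word A) :
  (forall b, sentence (psi b)) -> sentence chi ->
  (forall (p : pos u) b,
     f (subword (phi_rel phi p)) = b <-> models (subword (phi_rel phi p)) (psi b)) ->
  models u (condense_formula psi chi) <-> models (condense_word phi f u) chi.
Proof.
move=> psi_closed chi_closed f_psi.
eapply sat_relativize with (emb := @proj1_sig _ _) (e0 := @env0 _)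
  (V := fun _ => False) => //.
- exact: even_var_inj.
- move=> e x p _ ex; have x1 : even_var x <> 1 by rewrite /even_var; lia.
  rewrite (sat_least_in_class x1 ex).
  by split=> [rep|[[q rep] <-]]; first by exists (exist _ p rep).
- move=> e e' b x p' [e_r e_off] e'x; rewrite (sat_class_formula (p0 := sval p')) //.
  + by rewrite f_psi.
  + by move=> n; apply: odd_var_neq_even_var.
  + by rewrite e_r e'x.
  + by move=> n; rewrite e_off // => m /esym; apply: odd_var_neq_even_var.
Qed.

End Condensation.

Lemma wf_word_sig S T (w : word S) (P : pos w -> Prop) (l : {p | P p} -> T) :
  wf_word w ->
  wf_word (@Word T {p | P p} (fun p => enc (sval p)) (fun p q => wlt (sval p) (sval q)) l).
Proof.
move=> [enc_inj [lt_irr [lt_trans [lt_total lt_wf]]]].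
split; [|split; [|split; [|split]]].
- by move=> [p Pp] [q Pq] /= /enc_inj epq; subst q; rewrite (proof_irrelevance _ Pp Pq).
- by move=> [p ?]; apply: lt_irr.
- by move=> [p ?] [q ?] [r ?]; apply: lt_trans.
- move=> [p Pp] [q Pq] pq; apply: lt_total => /= epq; subst q.
  by apply: pq; rewrite (proof_irrelevance _ Pp Pq).
- exact: wf_inverse_image.
Qed.

Theorem lemma2p1 (A B C : finType) (phi : form A)
  (f : word A -> B) (g : word B -> C) :
  condensation_formula phi ->
  FO_map (@nonempty_word A) f ->
  FO_map (fun _ : word B => True) g ->
  FO_map (fun _ : word A => True) (fun u => g (condense_word phi f u)).
Proof.
move=> [phi_fv phi_cond] f_FO g_FO c.
have [psi psi_spec] := functional_choice _ f_FO.
have psi_closed b : sentence (psi b) := (psi_spec b).1.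
have [chi [chi_closed chi_spec]] := g_FO c.
exists (condense_formula phi psi chi); split.
  exact: sentence_condense_formula.
move=> u wf_u; rewrite (sat_condense_formula _ (f := f)) //.
  exact: chi_spec (wf_word_sig _ wf_u).
move=> p b; rewrite -(psi_spec b).2; last exact: wf_word_sig.
split=> [->|[]//]; split=> //; constructor.
by exists p; apply: (phi_cond u wf_u).1.
Qed.
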